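(* Let $n\in\mathbb{Z}$ with $|n|\geq 1$, $\alpha>0$, $R>0$ and $\kappa\in\mathbb{R}$. Suppose $u$ is a nontrivial solution of the $n$-vortex equation $$(ru_r)_r-\frac{n^2}{r}u+\frac{2ru^3}{1+\alpha u^2}-2\kappa ru=0\ \text{ on } (0,R),\qquad u(0)=0,\quad u(R)=0,$$ which has finite energy, i.e. $\mathcal{E}(u)<\infty$. Then $$\kappa<\alpha^{-1}-\frac{r_0^2+n^2}{2R^2},$$ where $r_0\approx 2.404825$ is the first positive zero of the Bessel function $J_0$.
   Context: The energy functional is $\mathcal{E}(u)=\frac12\int_0^R\left\{ru_r^2+\frac{1}{r}u^2+r\ln(1+\alpha u^2)\right\}dr$, where $u=u(r)$ is a real-valued function on $[0,R]$ and $u_r=du/dr$. *)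

From Stdlib Require Import Reals Lra ZArith.
From Coquelicot Require Import Coquelicot.
Open Scope R_scope.

Definition J0 (x : R) : R :=
  Series (fun k : nat => (-1) ^ k / (INR (fact k)) ^ 2 * (x / 2) ^ (2 * k)).

Definition first_pos_zero_J0 (r0 : R) : Prop :=
  0 < r0 /\ J0 r0 = 0 /\ (forall x, 0 < x < r0 -> J0 x <> 0).

(* Integrand of the energy functional (times 2). *)
Definition energy_density (alpha : R) (u : R -> R) (r : R) : R :=
  r * (Derive u r) ^ 2 + / r * (u r) ^ 2 + r * ln (1 + alpha * (u r) ^ 2).

Definition energy_is (alpha Rad : R) (u : R -> R) (E : R) : Prop :=
  is_RInt_gen (energy_density alpha u) (at_right 0) (at_left Rad) (2 * E).

(* Finite energy: the (improper) energy integral converges to a finite value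
   (the density is nonnegative, so this is the same as E(u) < +oo). *)
Definition finite_energy (alpha Rad : R) (u : R -> R) : Prop :=
  exists E : R, energy_is alpha Rad u E.

Definition vortex_ode (n : Z) (alpha kappa Rad : R) (u : R -> R) : Prop :=
  (forall r, 0 < r < Rad -> ex_derive u r) /\
  (forall r, 0 < r < Rad ->
     is_derive (fun s => s * Derive u s) r
       (IZR n ^ 2 / r * u r - 2 * r * (u r) ^ 3 / (1 + alpha * (u r) ^ 2)
        + 2 * kappa * r * u r)).

Definition vortex_bc (Rad : R) (u : R -> R) : Prop :=
  u 0 = 0 /\ u Rad = 0 /\
  filterlim u (at_right 0) (locally 0) /\ filterlim u (at_left Rad) (locally 0).

From Stdlib Require Import Reals Lra ZArith Classical.
From Coquelicot Require Import Coquelicot.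
Open Scope R_scope.

(* Let c = r0 / R and v r = J0 (c r), so that (r v_r)_r + c^2 r v = 0 and v > 0 on [0, R).
   Suppose the bound fails, and (replacing u by -u) u p > 0 for some p.  Then
   W = r (u_r v - u v_r) satisfies
     W_r = r u v (n^2/r^2 - 2 u^2/(1 + alpha u^2) + 2 kappa + c^2),
   whose last factor is positive because 2 u^2/(1 + alpha u^2) < 2/alpha; hence W increases
   strictly where u > 0.  If W p >= 0, then u > 0 on [p, R), since at a first zero b we would
   have W b = b u_r(b) v(b) <= 0; but W -> 0 at R because v R = 0 and r u_r stays bounded.
   If W p < 0, then u > 0 on (0, p], and W r < W p forces u_r < 0 near 0, which contradicts
   u -> 0 at 0. *)

(** * Limits and calculus on the real line *)

Lemma at_left_interval x (P : R -> Prop) :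
  at_left x P <-> exists d, 0 < d /\ forall r, x - d < r < x -> P r.
Proof.
  split.
  - intros [d Hd]; exists d; split; [apply cond_pos|].
    intros r Hr; apply Hd; [|lra].
    change (Rabs (r - x) < d); rewrite Rabs_left; lra.
  - intros [d [Hd0 Hd]]; exists (mkposreal d Hd0); intros r Hr Hrx; apply Hd.
    change (Rabs (r - x) < d) in Hr; rewrite Rabs_left in Hr; lra.
Qed.

Lemma at_right_interval x (P : R -> Prop) :
  at_right x P <-> exists d, 0 < d /\ forall r, x < r < x + d -> P r.
Proof.
  split.
  - intros [d Hd]; exists d; split; [apply cond_pos|].
    intros r Hr; apply Hd; [|lra].
    change (Rabs (r - x) < d); rewrite Rabs_right; lra.
  - intros [d [Hd0 Hd]]; exists (mkposreal d Hd0); intros r Hr Hxr; apply Hd.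
    change (Rabs (r - x) < d) in Hr; rewrite Rabs_right in Hr; lra.
Qed.

Lemma at_left_witness x q (P : R -> Prop) :
  q < x -> at_left x P -> exists r, q < r < x /\ P r.
Proof.
  intros Hq HP; destruct (proj1 (at_left_interval x P) HP) as [d [Hd HPd]].
  set (r := (Rmax q (x - d) + x) / 2).
  pose proof (Rmax_l q (x - d)); pose proof (Rmax_r q (x - d)).
  pose proof (Rmax_lub_lt q (x - d) x Hq ltac:(lra)).
  exists r; split; [unfold r; lra | apply HPd; unfold r; lra].
Qed.

Lemma at_right_witness x q (P : R -> Prop) :
  x < q -> at_right x P -> exists r, x < r < q /\ P r.
Proof.
  intros Hq HP; destruct (proj1 (at_right_interval x P) HP) as [d [Hd HPd]].
  set (r := (x + Rmin q (x + d)) / 2).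
  pose proof (Rmin_l q (x + d)); pose proof (Rmin_r q (x + d)).
  pose proof (Rmin_glb_lt q (x + d) x Hq ltac:(lra)).
  exists r; split; [unfold r; lra | apply HPd; unfold r; lra].
Qed.

Lemma filterlim_Rabs_lt {T} {F : (T -> Prop) -> Prop} {FF : Filter F} (f : T -> R) l e :
  filterlim f F (locally l) -> 0 < e -> F (fun x => Rabs (f x - l) < e).
Proof.
  intros Hf He; exact (proj1 (filterlim_locally f l) Hf (mkposreal e He)).
Qed.

Lemma filterlim_Rabs_bounded {T} {F : (T -> Prop) -> Prop} {FF : Filter F} (f : T -> R) l :
  filterlim f F (locally l) -> F (fun x => Rabs (f x) <= Rabs l + 1).
Proof.
  intro Hf; generalize (filterlim_Rabs_lt f l 1 Hf Rlt_0_1); apply filter_imp.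
  intros x Hx; pose proof (Rabs_triang_inv (f x) l); lra.
Qed.

Lemma filterlim_mult_bounded_0 {T} {F : (T -> Prop) -> Prop} {FF : Filter F} (f g : T -> R) M :
  F (fun x => Rabs (f x) <= M) -> filterlim g F (locally 0) ->
  filterlim (fun x => f x * g x) F (locally 0).
Proof.
  intros Hf Hg; apply filterlim_locally; intro e.
  assert (HM : 0 < e / (Rabs M + 1))
    by (apply Rdiv_lt_0_compat; [apply cond_pos | pose proof (Rabs_pos M); lra]).
  generalize (filter_and _ _ Hf (filterlim_Rabs_lt g 0 _ Hg HM)); apply filter_imp.
  intros x [Hfx Hgx]; change (Rabs (f x * g x - 0) < e).
  rewrite Rminus_0_r in *; rewrite Rabs_mult.
  pose proof (Rabs_pos M); pose proof (Rle_abs M).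
  assert (H1 : Rabs (f x) * Rabs (g x) <= (Rabs M + 1) * Rabs (g x))
    by (apply Rmult_le_compat_r; [apply Rabs_pos | lra]).
  assert (H2 : (Rabs M + 1) * Rabs (g x) < (Rabs M + 1) * (e / (Rabs M + 1)))
    by (apply Rmult_lt_compat_l; lra).
  replace ((Rabs M + 1) * (e / (Rabs M + 1))) with (pos e) in H2 by (field; lra).
  lra.
Qed.

Lemma filterlim_minus_0 {T} {F : (T -> Prop) -> Prop} {FF : Filter F} (f g : T -> R) :
  filterlim f F (locally 0) -> filterlim g F (locally 0) ->
  filterlim (fun x => f x - g x) F (locally 0).
Proof.
  intros Hf Hg; apply filterlim_locally; intro e.
  assert (He : 0 < e / 2) by (pose proof (cond_pos e); lra).
  generalize (filter_and _ _ (filterlim_Rabs_lt f 0 _ Hf He) (filterlim_Rabs_lt g 0 _ Hg He)).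
  apply filter_imp; intros x [Hfx Hgx]; change (Rabs (f x - g x - 0) < e).
  rewrite Rminus_0_r in *.
  assert (Rabs (f x - g x) <= Rabs (f x) + Rabs (g x))
    by (unfold Rminus; rewrite <- (Rabs_Ropp (g x)); apply Rabs_triang).
  lra.
Qed.

Lemma filterlim_opp_0 {T} {F : (T -> Prop) -> Prop} {FF : Filter F} (f : T -> R) :
  filterlim f F (locally 0) -> filterlim (fun x => - f x) F (locally 0).
Proof.
  intro Hf; apply filterlim_locally; intro e.
  generalize (filterlim_Rabs_lt f 0 e Hf (cond_pos e)); apply filter_imp; intros x Hx.
  change (Rabs (- f x - 0) < e); rewrite Rminus_0_r in *; rewrite Rabs_Ropp; exact Hx.
Qed.

Lemma continuity_pt_pos_locally f x :
  continuity_pt f x -> 0 < f x -> exists d, 0 < d /\ forall t, Rabs (t - x) < d -> 0 < f t.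
Proof.
  intros Hc Hfx.
  destruct (proj1 (continuity_pt_locally f x) Hc (mkposreal _ Hfx)) as [d Hd].
  exists d; split; [apply cond_pos|].
  intros t Ht; specialize (Hd t Ht); simpl in Hd; apply Rabs_def2 in Hd; lra.
Qed.

Lemma is_derive_nonneg_at_root_right f a l d :
  is_derive f a l -> f a = 0 -> 0 < d -> (forall t, a < t < a + d -> 0 < f t) -> 0 <= l.
Proof.
  intros Hd Ha Hd0 Hpos; apply Rnot_lt_le; intro Hl.
  destruct (proj1 (is_derive_Reals f a l) Hd (- l) ltac:(lra)) as [e He].
  set (h := Rmin e d / 2).
  assert (Hh : 0 < h /\ h < e /\ h < d).
  { pose proof (cond_pos e); pose proof (Rmin_l e d); pose proof (Rmin_r e d).
    pose proof (Rmin_glb_lt e d 0 ltac:(lra) Hd0); unfold h; lra. }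
  assert (Hq : 0 < (f (a + h) - f a) / h)
    by (rewrite Ha, Rminus_0_r; apply Rdiv_lt_0_compat; [apply Hpos|]; lra).
  specialize (He h ltac:(lra) ltac:(rewrite Rabs_right; lra)).
  apply Rabs_def2 in He; lra.
Qed.

Lemma is_derive_nonpos_at_root_left f b l d :
  is_derive f b l -> f b = 0 -> 0 < d -> (forall t, b - d < t < b -> 0 < f t) -> l <= 0.
Proof.
  intros Hd Hb Hd0 Hpos.
  assert (Hrefl : is_derive (fun t => f (- t)) (- b) (- l)).
  { replace (- l) with (-1 * l) by ring.
    apply (is_derive_comp f Ropp); [rewrite Ropp_involutive; exact Hd|].
    auto_derive; [exact I | ring]. }
  assert (0 <= - l); [|lra].
  apply (is_derive_nonneg_at_root_right _ _ _ d Hrefl);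
    [rewrite Ropp_involutive; exact Hb | exact Hd0 |].
  intros t Ht; apply Hpos; lra.
Qed.

Lemma first_root_right f x z :
  x < z -> 0 < f x -> f z <= 0 -> (forall t, x <= t <= z -> continuity_pt f t) ->
  exists b, x < b <= z /\ f b = 0 /\ forall t, x <= t < b -> 0 < f t.
Proof.
  intros Hxz Hfx Hfz Hc.
  set (E := fun t => x <= t <= z /\ forall s, x <= s <= t -> 0 < f s).
  assert (Ex : E x) by (split; [lra | intros s Hs; replace s with x by lra; exact Hfx]).
  destruct (completeness E) as [b [Hub Hlub]].
  { exists z; intros t [Ht _]; lra. }
  { exists x; exact Ex. }
  assert (Hxb : x <= b) by (apply Hub, Ex).
  assert (Hbz : b <= z) by (apply Hlub; intros t [Ht _]; lra).
  assert (Hpos : forall t, x <= t < b -> 0 < f t).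
  { intros t Ht; apply NNPP; intro Hft.
    assert (b <= t); [|lra].
    apply Hlub; intros e [He Hfe]; apply Rnot_lt_le; intro Hte; apply Hft, Hfe; lra. }
  assert (Hfb_nonneg : 0 <= f b).
  { apply Rnot_lt_le; intro Hfb.
    destruct (continuity_pt_pos_locally (fun t => - f t) b) as [d [Hd Hneg]].
    { apply continuity_pt_opp, Hc; lra. }
    { lra. }
    assert (Hxb' : x < b) by (destruct (Req_dec x b); [subst; lra | lra]).
    set (t := Rmax x (b - d / 2)).
    assert (Ht : x <= t < b /\ b - d / 2 <= t)
      by (unfold t; pose proof (Rmax_l x (b - d / 2)); pose proof (Rmax_r x (b - d / 2));
          pose proof (Rmax_lub_lt x (b - d / 2) b Hxb' ltac:(lra)); lra).
    specialize (Hneg t ltac:(rewrite Rabs_left; lra)); specialize (Hpos t ltac:(lra)); lra. }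
  assert (Hfb_nonpos : f b <= 0).
  { apply Rnot_lt_le; intro Hfb.
    destruct (continuity_pt_pos_locally f b) as [d [Hd Hpos']]; [apply Hc; lra | exact Hfb |].
    assert (Hbz' : b < z) by (destruct (Req_dec b z); [subst; lra | lra]).
    set (t := Rmin z (b + d / 2)).
    assert (Ht : b < t <= z /\ t <= b + d / 2)
      by (unfold t; pose proof (Rmin_l z (b + d / 2)); pose proof (Rmin_r z (b + d / 2));
          pose proof (Rmin_glb_lt z (b + d / 2) b Hbz' ltac:(lra)); lra).
    assert (t <= b); [|lra].
    apply Hub; split; [lra|].
    intros s Hs; destruct (Rlt_le_dec s b); [apply Hpos; lra|].
    apply Hpos'; rewrite Rabs_right; lra. }
  exists b; split; [|split; [lra | exact Hpos]].
  split; [|exact Hbz].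
  destruct (Req_dec x b) as [<- | ]; lra.
Qed.

Lemma first_root_left f z x :
  z < x -> 0 < f x -> f z <= 0 -> (forall t, z <= t <= x -> continuity_pt f t) ->
  exists a, z <= a < x /\ f a = 0 /\ forall t, a < t <= x -> 0 < f t.
Proof.
  intros Hzx Hfx Hfz Hc.
  destruct (first_root_right (fun t => f (- t)) (- x) (- z)) as [b [Hb [Hfb Hpos]]].
  - lra.
  - rewrite Ropp_involutive; exact Hfx.
  - rewrite Ropp_involutive; exact Hfz.
  - intros t Ht; apply (continuity_pt_comp Ropp f t).
    + apply continuity_pt_opp, continuity_pt_id.
    + apply Hc; lra.
  - exists (- b); split; [lra | split; [exact Hfb |]].
    intros t Ht; replace t with (- - t) by ring; apply Hpos; lra.
Qed.

Lemma lt_of_is_derive_pos f df a b :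
  a < b -> (forall t, a <= t <= b -> is_derive f t (df t)) ->
  (forall t, a < t < b -> 0 < df t) -> f a < f b.
Proof.
  intros Hab Hd Hpos.
  destruct (MVT_cor2 f df a b Hab) as [c [Hfab Hc]].
  - intros t Ht; apply is_derive_Reals, Hd, Ht.
  - specialize (Hpos c Hc).
    assert (0 < df c * (b - a)) by (apply Rmult_lt_0_compat; lra); lra.
Qed.

Lemma Rabs_le_of_is_derive_bounded f df a b M :
  a < b -> (forall t, a <= t <= b -> is_derive f t (df t)) ->
  (forall t, a < t < b -> Rabs (df t) <= M) -> Rabs (f b) <= Rabs (f a) + M * (b - a).
Proof.
  intros Hab Hd Hbound.
  destruct (MVT_cor2 f df a b Hab) as [c [Hfab Hc]].
  - intros t Ht; apply is_derive_Reals, Hd, Ht.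
  - replace (f b) with (f a + df c * (b - a)) by lra.
    eapply Rle_trans; [apply Rabs_triang|]; apply Rplus_le_compat_l.
    rewrite Rabs_mult, (Rabs_right (b - a)) by lra.
    apply Rmult_le_compat_r; [lra | exact (Hbound c Hc)].
Qed.

(** * The Bessel function J0 *)

Definition J0_coef (k : nat) : R := (-1) ^ k / INR (fact k) ^ 2.

Lemma J0_coef_neq0 k : J0_coef k <> 0.
Proof.
  unfold J0_coef; pose proof (INR_fact_lt_0 k).
  apply Rmult_integral_contrapositive_currified.
  - apply pow_nonzero; lra.
  - apply Rinv_neq_0_compat, pow_nonzero; lra.
Qed.

Lemma J0_coef_S k : J0_coef (S k) = - J0_coef k / INR (S k) ^ 2.
Proof.
  unfold J0_coef; rewrite fact_simpl, mult_INR; change ((-1) ^ S k) with (-1 * (-1) ^ k).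
  pose proof (INR_fact_lt_0 k); pose proof (lt_0_INR (S k) (Nat.lt_0_succ k)).
  field; lra.
Qed.

Lemma CV_radius_J0_coef : CV_radius J0_coef = p_infty.
Proof.
  apply CV_radius_infinite_DAlembert; [exact J0_coef_neq0|].
  apply is_lim_seq_ext with (fun k => / (INR (S k) * INR (S k))).
  - intro k; rewrite J0_coef_S.
    pose proof (J0_coef_neq0 k); pose proof (lt_0_INR (S k) (Nat.lt_0_succ k)).
    replace (- J0_coef k / INR (S k) ^ 2 / J0_coef k)
      with (- / (INR (S k) * INR (S k))) by (field; lra).
    rewrite Rabs_Ropp, Rabs_pos_eq; [reflexivity|].
    apply Rlt_le, Rinv_0_lt_compat, Rmult_lt_0_compat; lra.
  - change (is_lim_seq (fun k => / (INR (S k) * INR (S k))) (Rbar_inv p_infty)).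
    apply is_lim_seq_inv; [|discriminate].
    apply (is_lim_seq_mult _ _ p_infty p_infty); try reflexivity;
      apply (is_lim_seq_incr_1 INR p_infty), is_lim_seq_INR.
Qed.

Lemma J0_PSeries x : J0 x = PSeries J0_coef ((x / 2) ^ 2).
Proof.
  apply Series_ext; intro k; unfold J0_coef; rewrite pow_mult; reflexivity.
Qed.

Lemma is_derive_PSeries_half_sq (a : nat -> R) x :
  CV_radius a = p_infty ->
  is_derive (fun y => PSeries a ((y / 2) ^ 2)) x
    (x / 2 * PSeries (PS_derive a) ((x / 2) ^ 2)).
Proof.
  intro Ha.
  assert (Hsq : is_derive (fun y => (y / 2) ^ 2) x (x / 2)) by (auto_derive; [exact I | field]).
  apply (is_derive_comp (PSeries a) _ x _ _); [|exact Hsq].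
  apply is_derive_PSeries; rewrite Ha; exact I.
Qed.

Lemma is_derive_J0 x :
  is_derive J0 x (x / 2 * PSeries (PS_derive J0_coef) ((x / 2) ^ 2)).
Proof.
  apply is_derive_ext with (fun y => PSeries J0_coef ((y / 2) ^ 2)).
  - intro y; symmetry; apply J0_PSeries.
  - apply is_derive_PSeries_half_sq, CV_radius_J0_coef.
Qed.

Lemma continuous_J0 x : continuous J0 x.
Proof.
  apply (ex_derive_continuous (K := R_AbsRing) (V := R_NormedModule)).
  eexists; apply is_derive_J0.
Qed.

Lemma J0_0 : J0 0 = 1.
Proof.
  rewrite J0_PSeries; replace ((0 / 2) ^ 2) with 0 by field.
  rewrite PSeries_0; unfold J0_coef; simpl; field.
Qed.

Lemma J0_pos_before_first_zero r0 x : first_pos_zero_J0 r0 -> 0 <= x < r0 -> 0 < J0 x.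
Proof.
  intros [_ [_ Hnz]] Hx.
  apply Rnot_le_lt; intro Hle.
  destruct (Req_dec x 0) as [-> | Hx0]; [rewrite J0_0 in Hle; lra|].
  destruct (Ranalysis5.f_interv_is_interv (fun y => - J0 y) 0 x 0) as [y [Hy Hy0]].
  - lra.
  - rewrite J0_0; lra.
  - intros y _; apply continuity_pt_opp, continuity_pt_filterlim, continuous_J0.
  - destruct (Req_dec y 0) as [-> | Hy1]; [rewrite J0_0 in Hy0; lra|].
    apply (Hnz y); lra.
Qed.

Definition bessel_flux (x : R) : R := x * Derive J0 x.

Lemma bessel_flux_PSeries x :
  bessel_flux x = 2 * PSeries (PS_incr_1 (PS_derive J0_coef)) ((x / 2) ^ 2).
Proof.
  unfold bessel_flux; rewrite (is_derive_unique _ _ _ (is_derive_J0 x)), PSeries_incr_1.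
  field.
Qed.

Lemma PS_derive_incr_1_derive_J0_coef k :
  PS_derive (PS_incr_1 (PS_derive J0_coef)) k = - J0_coef k.
Proof.
  change (PS_derive (PS_incr_1 (PS_derive J0_coef)) k)
    with (INR (S k) * (INR (S k) * J0_coef (S k))).
  rewrite J0_coef_S; pose proof (lt_0_INR (S k) (Nat.lt_0_succ k)).
  field; lra.
Qed.

Lemma is_derive_bessel_flux x : is_derive bessel_flux x (- x * J0 x).
Proof.
  set (b := PS_incr_1 (PS_derive J0_coef)).
  apply is_derive_ext with (fun y => 2 * PSeries b ((y / 2) ^ 2)).
  - intro y; symmetry; apply bessel_flux_PSeries.
  - replace (- x * J0 x) with (2 * (x / 2 * PSeries (PS_derive b) ((x / 2) ^ 2))).
    + apply is_derive_scal, is_derive_PSeries_half_sq.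
      unfold b; rewrite CV_radius_incr_1, CV_radius_derive; apply CV_radius_J0_coef.
    + rewrite (PSeries_ext _ (PS_opp J0_coef)) by apply PS_derive_incr_1_derive_J0_coef.
      rewrite PSeries_opp, <- J0_PSeries; field.
Qed.

Lemma continuous_bessel_flux x : continuous bessel_flux x.
Proof.
  apply (ex_derive_continuous (K := R_AbsRing) (V := R_NormedModule)).
  eexists; apply is_derive_bessel_flux.
Qed.

(** * Comparing a vortex with J0 *)

Definition vortex_rhs (n2 alpha kappa r y : R) : R :=
  n2 / r * y - 2 * r * y ^ 3 / (1 + alpha * y ^ 2) + 2 * kappa * r * y.

Lemma vortex_rhs_opp n2 alpha kappa r y :
  vortex_rhs n2 alpha kappa r (- y) = - vortex_rhs n2 alpha kappa r y.
Proof. unfold vortex_rhs; replace ((- y) ^ 2) with (y ^ 2) by ring; unfold Rdiv; ring. Qed.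

Lemma Rabs_vortex_rhs_le n2 alpha kappa Rad q r y :
  0 <= n2 -> 0 <= alpha -> 0 < q <= r -> r <= Rad -> Rabs y <= 1 ->
  Rabs (vortex_rhs n2 alpha kappa r y) <= n2 / q + 2 * Rad + 2 * Rabs kappa * Rad.
Proof.
  intros Hn2 Ha Hqr HrR Hy.
  assert (Hden : 1 <= 1 + alpha * y ^ 2) by (pose proof (pow2_ge_0 y); nra).
  assert (Hy2 : y ^ 2 <= 1) by (rewrite <- pow2_abs; pose proof (Rabs_pos y); nra).
  assert (Hs : 0 <= y ^ 2 / (1 + alpha * y ^ 2) <= 1).
  { split; [apply Rdiv_le_0_compat; [apply pow2_ge_0 | lra]|].
    apply Rmult_le_reg_r with (1 + alpha * y ^ 2); [lra|].
    unfold Rdiv; rewrite Rmult_assoc, Rinv_l by lra; nra. }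
  set (s := y ^ 2 / (1 + alpha * y ^ 2)) in Hs.
  replace (vortex_rhs n2 alpha kappa r y) with (y * (n2 / r - 2 * r * s + 2 * kappa * r))
    by (unfold vortex_rhs, s; field; lra).
  assert (Hn2r : 0 <= n2 / r <= n2 / q).
  { split; [apply Rdiv_le_0_compat; lra|].
    apply Rmult_le_compat_l; [lra | apply Rinv_le_contravar; lra]. }
  assert (Hk : Rabs (2 * kappa * r) <= 2 * Rabs kappa * Rad).
  { rewrite !Rabs_mult, (Rabs_right 2), (Rabs_right r) by lra.
    pose proof (Rabs_pos kappa); nra. }
  assert (Hfactor : Rabs (n2 / r - 2 * r * s + 2 * kappa * r)
                    <= n2 / q + 2 * Rad + 2 * Rabs kappa * Rad).
  { pose proof (Rabs_triang (n2 / r - 2 * r * s) (2 * kappa * r)).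
    pose proof (Rabs_triang (n2 / r) (- (2 * r * s))).
    rewrite Rabs_Ropp, (Rabs_right (n2 / r)), (Rabs_right (2 * r * s)) in * by nra.
    unfold Rminus in *; nra. }
  rewrite Rabs_mult.
  pose proof (Rabs_pos y); pose proof (Rabs_pos (n2 / r - 2 * r * s + 2 * kappa * r)).
  pose proof (Rabs_pos kappa); nra.
Qed.

Lemma wronskian_weight_pos n2 alpha kappa Rad r0 r y :
  0 <= n2 -> 0 < alpha -> 0 < r < Rad ->
  / alpha - (r0 ^ 2 + n2) / (2 * Rad ^ 2) <= kappa ->
  0 < n2 / r ^ 2 - 2 * y ^ 2 / (1 + alpha * y ^ 2) + 2 * kappa + (r0 / Rad) ^ 2.
Proof.
  intros Hn2 Ha Hr Hk.
  assert (Hden : 0 < 1 + alpha * y ^ 2) by (pose proof (pow2_ge_0 y); nra).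
  assert (Hsat : 2 * y ^ 2 / (1 + alpha * y ^ 2) < 2 / alpha).
  { replace (2 * y ^ 2 / (1 + alpha * y ^ 2)) with (2 / alpha - 2 / (alpha * (1 + alpha * y ^ 2)))
      by (field; lra).
    assert (0 < 2 / (alpha * (1 + alpha * y ^ 2))) by (apply Rdiv_lt_0_compat; nra).
    lra. }
  assert (Hcentr : n2 / Rad ^ 2 <= n2 / r ^ 2).
  { apply Rmult_le_compat_l; [lra|].
    apply Rinv_le_contravar; [apply pow_lt; lra | apply pow_incr; lra]. }
  replace ((r0 ^ 2 + n2) / (2 * Rad ^ 2)) with (((r0 / Rad) ^ 2 + n2 / Rad ^ 2) / 2) in Hk
    by (field; lra).
  replace (2 / alpha) with (2 * / alpha) in Hsat by (unfold Rdiv; ring).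
  lra.
Qed.

(* [r (u_r v - u v_r)] with [v r = J0 (c r)], as [r v_r = bessel_flux (c r)]. *)
Definition wronskian (c : R) (u : R -> R) (r : R) : R :=
  r * Derive u r * J0 (c * r) - bessel_flux (c * r) * u r.

Lemma is_derive_wronskian n2 alpha kappa c u r :
  0 <= alpha -> 0 < r -> ex_derive u r ->
  is_derive (fun s => s * Derive u s) r (vortex_rhs n2 alpha kappa r (u r)) ->
  is_derive (wronskian c u) r
    (r * u r * J0 (c * r) *
     (n2 / r ^ 2 - 2 * u r ^ 2 / (1 + alpha * u r ^ 2) + 2 * kappa + c ^ 2)).
Proof.
  intros Ha Hr Hu HP.
  assert (Hc : is_derive (fun s => c * s) r c) by (auto_derive; [exact I | ring]).
  assert (HJ : is_derive J0 (c * r) (Derive J0 (c * r)))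
    by (apply Derive_correct; eexists; apply is_derive_J0).
  assert (Hden : 0 < 1 + alpha * u r ^ 2) by (pose proof (pow2_ge_0 (u r)); nra).
  replace (r * u r * J0 (c * r) * _)
    with (vortex_rhs n2 alpha kappa r (u r) * J0 (c * r)
          + r * Derive u r * (c * Derive J0 (c * r))
          - ((c * (- (c * r) * J0 (c * r))) * u r + bessel_flux (c * r) * Derive u r))
    by (unfold vortex_rhs, bessel_flux; field; lra).
  unfold wronskian.
  apply (is_derive_minus (fun s => s * Derive u s * J0 (c * s))
           (fun s => bessel_flux (c * s) * u s)).
  - apply (is_derive_mult (fun s => s * Derive u s) (fun s => J0 (c * s)));
      [exact HP | | exact Rmult_comm].
    exact (is_derive_comp J0 (fun s => c * s) r _ _ HJ Hc).
  - apply (is_derive_mult (fun s => bessel_flux (c * s)) u);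
      [| apply Derive_correct, Hu | exact Rmult_comm].
    exact (is_derive_comp bessel_flux (fun s => c * s) r _ _ (is_derive_bessel_flux _) Hc).
Qed.

Lemma continuous_dilate (g : R -> R) c x :
  continuous g (c * x) -> continuous (fun r => g (c * r)) x.
Proof.
  intro Hg; apply (continuous_comp (fun r => c * r) g x); [|exact Hg].
  apply (ex_derive_continuous (K := R_AbsRing) (V := R_NormedModule)).
  auto_derive; exact I.
Qed.

Section PositiveSolution.

Variables (n2 alpha kappa Rad r0 : R) (u : R -> R).
Hypothesis n2_nonneg : 0 <= n2.
Hypothesis alpha_pos : 0 < alpha.
Hypothesis Rad_pos : 0 < Rad.
Hypothesis r0_first_zero : first_pos_zero_J0 r0.
Hypothesis u_ex_derive : forall r, 0 < r < Rad -> ex_derive u r.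
Hypothesis u_ode : forall r, 0 < r < Rad ->
  is_derive (fun s => s * Derive u s) r (vortex_rhs n2 alpha kappa r (u r)).
Hypothesis u_lim_0 : filterlim u (at_right 0) (locally 0).
Hypothesis u_lim_Rad : filterlim u (at_left Rad) (locally 0).
Hypothesis kappa_large : / alpha - (r0 ^ 2 + n2) / (2 * Rad ^ 2) <= kappa.

Let c := r0 / Rad.
Let W := wronskian c u.

Lemma J0_dilate_pos r : 0 <= r < Rad -> 0 < J0 (c * r).
Proof.
  intro Hr; apply (J0_pos_before_first_zero r0); [exact r0_first_zero|].
  destruct r0_first_zero as [Hr0 _].
  assert (Hc : 0 < c) by (apply Rdiv_lt_0_compat; lra).
  assert (c * Rad = r0) by (unfold c; field; lra).
  nra.
Qed.

Lemma u_continuity_pt r : 0 < r < Rad -> continuity_pt u r.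
Proof.
  intro Hr; apply continuity_pt_filterlim.
  apply (ex_derive_continuous (K := R_AbsRing) (V := R_NormedModule)), u_ex_derive, Hr.
Qed.

Lemma wronskian_lt a b :
  0 < a -> b < Rad -> a < b -> (forall t, a < t < b -> 0 < u t) -> W a < W b.
Proof.
  intros Ha Hb Hab Hpos.
  apply (lt_of_is_derive_pos _
    (fun r => r * u r * J0 (c * r) *
       (n2 / r ^ 2 - 2 * u r ^ 2 / (1 + alpha * u r ^ 2) + 2 * kappa + c ^ 2))); [exact Hab | |].
  - intros t Ht; apply is_derive_wronskian; try lra; [apply u_ex_derive | apply u_ode]; lra.
  - intros t Ht.
    pose proof (wronskian_weight_pos n2 alpha kappa Rad r0 t (u t) n2_nonneg alpha_pos
                  ltac:(lra) kappa_large).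
    pose proof (J0_dilate_pos t ltac:(lra)); pose proof (Hpos t Ht).
    unfold c in *; repeat apply Rmult_lt_0_compat; lra.
Qed.

Lemma wronskian_nonpos_at_root b d :
  0 < b < Rad -> u b = 0 -> 0 < d -> (forall t, b - d < t < b -> 0 < u t) -> W b <= 0.
Proof.
  intros Hb Hub Hd Hpos.
  assert (Hdu : Derive u b <= 0)
    by (apply (is_derive_nonpos_at_root_left u b _ d); auto;
        apply Derive_correct, u_ex_derive, Hb).
  pose proof (J0_dilate_pos b ltac:(lra)).
  unfold W, wronskian; rewrite Hub.
  assert (b * Derive u b <= 0) by nra.
  nra.
Qed.

Lemma wronskian_nonneg_at_root a d :
  0 < a < Rad -> u a = 0 -> 0 < d -> (forall t, a < t < a + d -> 0 < u t) -> 0 <= W a.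
Proof.
  intros Ha Hua Hd Hpos.
  assert (Hdu : 0 <= Derive u a)
    by (apply (is_derive_nonneg_at_root_right u a _ d); auto;
        apply Derive_correct, u_ex_derive, Ha).
  pose proof (J0_dilate_pos a ltac:(lra)).
  unfold W, wronskian; rewrite Hua.
  assert (0 <= a * Derive u a) by nra.
  nra.
Qed.

Lemma flux_bounded_near_Rad : exists K, at_left Rad (fun r => Rabs (r * Derive u r) <= K).
Proof.
  destruct (proj1 (at_left_interval Rad _) (filterlim_Rabs_lt u 0 1 u_lim_Rad Rlt_0_1))
    as [d [Hd Hu_small]].
  set (q := Rmax (Rad / 2) (Rad - d)).
  assert (Hq : 0 < q < Rad /\ Rad - d <= q).
  { pose proof (Rmax_l (Rad / 2) (Rad - d)); pose proof (Rmax_r (Rad / 2) (Rad - d)).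
    pose proof (Rmax_lub_lt (Rad / 2) (Rad - d) Rad ltac:(lra) ltac:(lra)); unfold q; lra. }
  set (M := n2 / q + 2 * Rad + 2 * Rabs kappa * Rad).
  assert (HM : 0 <= M)
    by (pose proof (Rabs_pos kappa); assert (0 <= n2 / q) by (apply Rdiv_le_0_compat; lra);
        unfold M; nra).
  exists (Rabs (q * Derive u q) + M * (Rad - q)).
  apply at_left_interval; exists (Rad - q); split; [lra|]; intros r Hr.
  assert (Hbound : Rabs (r * Derive u r) <= Rabs (q * Derive u q) + M * (r - q)).
  { apply (Rabs_le_of_is_derive_bounded (fun s => s * Derive u s)
      (fun s => vortex_rhs n2 alpha kappa s (u s)) q r M); [lra | |].
    - intros t Ht; apply u_ode; lra.
    - intros t Ht; apply Rabs_vortex_rhs_le; try lra.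
      specialize (Hu_small t ltac:(lra)); rewrite Rminus_0_r in Hu_small; lra. }
  assert (M * (r - q) <= M * (Rad - q)) by (apply Rmult_le_compat_l; lra).
  lra.
Qed.

Lemma wronskian_lim_Rad : filterlim W (at_left Rad) (locally 0).
Proof.
  assert (HcRad : c * Rad = r0) by (unfold c; field; lra).
  assert (HJ : filterlim (fun r => J0 (c * r)) (at_left Rad) (locally 0)).
  { destruct r0_first_zero as [_ [HJr0 _]].
    rewrite <- HJr0, <- HcRad.
    apply (filterlim_filter_le_1 _ (filter_le_within _)).
    apply continuous_dilate, continuous_J0. }
  assert (HV : at_left Rad
                 (fun r => Rabs (bessel_flux (c * r)) <= Rabs (bessel_flux (c * Rad)) + 1)).
  { apply filterlim_Rabs_bounded, (filterlim_filter_le_1 _ (filter_le_within _)).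
    apply continuous_dilate, continuous_bessel_flux. }
  destruct flux_bounded_near_Rad as [K HK].
  apply filterlim_minus_0.
  - exact (filterlim_mult_bounded_0 _ _ K HK HJ).
  - exact (filterlim_mult_bounded_0 _ _ _ HV u_lim_Rad).
Qed.

Lemma u_pos_right_of p :
  0 < p < Rad -> 0 < u p -> 0 <= W p -> forall z, p <= z < Rad -> 0 < u z.
Proof.
  intros Hp Hup HWp z Hz; apply Rnot_le_lt; intro Huz.
  assert (Hpz : p < z) by (destruct (Req_dec p z) as [<- | ]; lra).
  destruct (first_root_right u p z Hpz Hup Huz) as [b [Hb [Hub Hpos]]].
  { intros t Ht; apply u_continuity_pt; lra. }
  assert (W p < W b) by (apply wronskian_lt; try lra; intros t Ht; apply Hpos; lra).
  assert (W b <= 0)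
    by (apply (wronskian_nonpos_at_root b (b - p)); try lra; intros t Ht; apply Hpos; lra).
  lra.
Qed.

Lemma u_pos_left_of p :
  0 < p < Rad -> 0 < u p -> W p < 0 -> forall z, 0 < z <= p -> 0 < u z.
Proof.
  intros Hp Hup HWp z Hz; apply Rnot_le_lt; intro Huz.
  assert (Hzp : z < p) by (destruct (Req_dec z p) as [-> | ]; lra).
  destruct (first_root_left u z p Hzp Hup Huz) as [a [Ha [Hua Hpos]]].
  { intros t Ht; apply u_continuity_pt; lra. }
  assert (W a < W p) by (apply wronskian_lt; try lra; intros t Ht; apply Hpos; lra).
  assert (0 <= W a)
    by (apply (wronskian_nonneg_at_root a (p - a)); try lra; intros t Ht; apply Hpos; lra).
  lra.
Qed.

Lemma wronskian_nonneg_absurd p : 0 < p < Rad -> 0 < u p -> 0 <= W p -> False.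
Proof.
  intros Hp Hup HWp.
  pose proof (u_pos_right_of p Hp Hup HWp) as Hpos.
  set (q := (p + Rad) / 2).
  assert (Hpq : W p < W q) by (apply wronskian_lt; unfold q; try lra; intros; apply Hpos; lra).
  destruct (at_left_witness Rad q _ ltac:(unfold q; lra)
              (filterlim_Rabs_lt W 0 (W q) wronskian_lim_Rad ltac:(lra))) as [r [Hr HWr]].
  assert (Hqr : W q < W r)
    by (apply wronskian_lt; unfold q in *; try lra; intros; apply Hpos; lra).
  rewrite Rminus_0_r in HWr; apply Rabs_def2 in HWr; lra.
Qed.

Lemma wronskian_neg_absurd p : 0 < p < Rad -> 0 < u p -> W p < 0 -> False.
Proof.
  intros Hp Hup HWp.
  pose proof (u_pos_left_of p Hp Hup HWp) as Hpos.
  assert (Hflux : filterlim (fun r => bessel_flux (c * r) * u r) (at_right 0) (locally 0)).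
  { apply (filterlim_mult_bounded_0 _ _ _ (filterlim_Rabs_bounded _ _
      (filterlim_filter_le_1 _ (filter_le_within _)
         (continuous_dilate _ c 0 (continuous_bessel_flux _))))), u_lim_0. }
  destruct (proj1 (at_right_interval 0 _) (filterlim_Rabs_lt _ 0 (- W p / 2) Hflux ltac:(lra)))
    as [d [Hd Hsmall]].
  set (e := Rmin d p).
  assert (He : 0 < e <= d /\ e <= p)
    by (pose proof (Rmin_l d p); pose proof (Rmin_r d p);
        pose proof (Rmin_glb_lt d p 0 Hd ltac:(lra)); unfold e; lra).
  assert (Hdecr : forall r, 0 < r < e -> Derive u r < 0).
  { intros r Hr.
    assert (W r < W p) by (apply wronskian_lt; try lra; intros; apply Hpos; lra).
    specialize (Hsmall r ltac:(lra)); rewrite Rminus_0_r in Hsmall; apply Rabs_def2 in Hsmall.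
    pose proof (J0_dilate_pos r ltac:(lra)).
    unfold W, wronskian in *.
    apply Rnot_le_lt; intro Hdu; assert (0 <= r * Derive u r) by nra; nra. }
  set (s := e / 2).
  assert (Hus : 0 < u s) by (apply Hpos; unfold s; lra).
  destruct (at_right_witness 0 s _ ltac:(unfold s; lra)
              (filterlim_Rabs_lt u 0 (u s) u_lim_0 Hus)) as [r [Hr Hur]].
  assert (Hrs : - u r < - u s).
  { apply (incr_function (fun t => - u t) 0 e (fun t => - Derive u t)); simpl;
      [| | lra | lra | unfold s; lra].
    - intros t Ht0 Hte; apply (is_derive_opp u), Derive_correct, u_ex_derive; lra.
    - intros t Ht0 Hte; pose proof (Hdecr t ltac:(lra)); lra. }
  rewrite Rminus_0_r in Hur; apply Rabs_def2 in Hur; lra.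
Qed.

Lemma positive_value_absurd p : 0 < p < Rad -> 0 < u p -> False.
Proof.
  intros Hp Hup; destruct (Rle_or_lt 0 (W p)) as [HWp | HWp].
  - exact (wronskian_nonneg_absurd p Hp Hup HWp).
  - exact (wronskian_neg_absurd p Hp Hup HWp).
Qed.

End PositiveSolution.

Lemma vortex_flux_opp n2 alpha kappa Rad (u : R -> R) :
  (forall r, 0 < r < Rad ->
     is_derive (fun s => s * Derive u s) r (vortex_rhs n2 alpha kappa r (u r))) ->
  forall r, 0 < r < Rad ->
    is_derive (fun s => s * Derive (fun x => - u x) s) r
      (vortex_rhs n2 alpha kappa r (- u r)).
Proof.
  intros Hode r Hr; rewrite vortex_rhs_opp.
  apply (is_derive_ext (fun s => - (s * Derive u s))).
  - intro t; rewrite Derive_opp; apply Ropp_mult_distr_r.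
  - apply (is_derive_opp (fun s => s * Derive u s)), Hode, Hr.
Qed.

Theorem theorem2p1 (n : Z) (alpha Rad kappa r0 : R) (u : R -> R) :
  (1 <= Z.abs n)%Z -> 0 < alpha -> 0 < Rad ->
  first_pos_zero_J0 r0 ->
  vortex_ode n alpha kappa Rad u ->
  vortex_bc Rad u ->
  (exists r, 0 < r < Rad /\ u r <> 0) ->
  finite_energy alpha Rad u ->
  kappa < / alpha - (r0 ^ 2 + IZR n ^ 2) / (2 * Rad ^ 2).
Proof.
  intros _ Halpha HRad Hr0 [Hex Hode] [_ [_ [Hlim0 HlimRad]]] [p [Hp Hup]] _.
  apply Rnot_le_lt; intro Hkappa.
  assert (Hn2 : 0 <= IZR n ^ 2) by apply pow2_ge_0.
  destruct (Rlt_or_le 0 (u p)) as [Hpos | Hneg].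
  - exact (positive_value_absurd (IZR n ^ 2) alpha kappa Rad r0 u Hn2 Halpha HRad Hr0 Hex Hode
             Hlim0 HlimRad Hkappa p Hp Hpos).
  - apply (positive_value_absurd (IZR n ^ 2) alpha kappa Rad r0 (fun x => - u x)
             Hn2 Halpha HRad Hr0 (fun r Hr => ex_derive_opp u r (Hex r Hr))
             (vortex_flux_opp _ _ _ _ u Hode) (filterlim_opp_0 u Hlim0)
             (filterlim_opp_0 u HlimRad) Hkappa p Hp).
    lra.
Qed.
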